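(* Let $(A,\to,1)$ be an algebra of type $(2,0)$. Then: (a) (Re), (L), (Ex) and ( ** ) imply (p-2); (b) (Ex), (B), ( * ) and (pi) imply (p-1); (c) (p-1), (p-2) and (An) imply (pimpl); (d) (Re), (Ex), (B), ( ** ), ( * ), (L), (An) and (pi) together imply (pimpl).
   Context: Properties, required for all $x,y,z\in A$: (Re) $x\to x=1$; (L) $x\to 1=1$; (Ex) $x\to(y\to z)=y\to(x\to z)$; (B) $(y\to z)\to((x\to y)\to(x\to z))=1$; ( * ) $y\to z=1$ implies $(x\to y)\to(x\to z)=1$; ( ** ) $y\to z=1$ implies $(z\to x)\to(y\to x)=1$; (An) $x\to y=1$ and $y\to x=1$ imply $x=y$; (pimpl) $x\to(y\to z)=(x\to y)\to(x\to z)$; (pi) $y\to(y\to x)=y\to x$; (p-1) $(x\to(y\to z))\to((x\to y)\to(x\to z))=1$; (p-2) $((x\to y)\to(x\to z))\to(x\to(y\to z))=1$. *)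

Section Props.
Variables (A : Type) (imp : A -> A -> A) (one : A).
Local Infix "→" := imp (at level 55, right associativity).

Definition P_Re : Prop := forall x : A, x → x = one.
Definition P_L : Prop := forall x : A, x → one = one.
Definition P_Ex : Prop := forall x y z : A, x → (y → z) = y → (x → z).
Definition P_B : Prop :=
  forall x y z : A, (y → z) → ((x → y) → (x → z)) = one.
Definition P_star : Prop :=
  forall x y z : A, y → z = one -> (x → y) → (x → z) = one.
Definition P_starstar : Prop :=
  forall x y z : A, y → z = one -> (z → x) → (y → x) = one.
Definition P_An : Prop :=
  forall x y : A, x → y = one -> y → x = one -> x = y.
Definition P_pimpl : Prop :=
  forall x y z : A, x → (y → z) = (x → y) → (x → z).
Definition P_pi : Prop := forall x y : A, y → (y → x) = y → x.
Definition P_p1 : Prop :=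
  forall x y z : A, (x → (y → z)) → ((x → y) → (x → z)) = one.
Definition P_p2 : Prop :=
  forall x y z : A, ((x → y) → (x → z)) → (x → (y → z)) = one.

End Props.

Arguments P_Re {A}. Arguments P_L {A}. Arguments P_Ex {A}. Arguments P_B {A}.
Arguments P_star {A}. Arguments P_starstar {A}. Arguments P_An {A}.
Arguments P_pimpl {A}. Arguments P_pi {A}. Arguments P_p1 {A}. Arguments P_p2 {A}.


(* (p-2): by (Ex) its premise becomes (x → y) → (x → z) → (y → x → z), an
   instance of (star-star) whose hypothesis y → (x → y) = 1 is (L) after
   exchanging and applying (Re).  (p-1): apply (star) with antecedent x to
   (B); then (Ex) and (pi) collapse the doubled antecedent x → x → ... . *)

Section TwoZeroAlgebra.
Variables (A : Type) (imp : A -> A -> A) (one : A).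
Local Infix "→" := imp (at level 55, right associativity).

Lemma p2_of_Re_L_Ex_starstar :
  P_Re imp one -> P_L imp one -> P_Ex imp -> P_starstar imp one ->
  P_p2 imp one.
Proof.
  intros Re L Ex SS x y z.
  rewrite (Ex x y z).
  apply SS.
  rewrite Ex, Re, L. reflexivity.
Qed.

Lemma p1_of_Ex_B_star_pi :
  P_Ex imp -> P_B imp one -> P_star imp one -> P_pi imp -> P_p1 imp one.
Proof.
  intros Ex B S Pi x y z.
  pose proof (S x _ _ (B x y z)) as H.
  rewrite (Ex x (x → y) (x → z)), Pi in H.
  exact H.
Qed.

Lemma pimpl_of_p1_p2_An :
  P_p1 imp one -> P_p2 imp one -> P_An imp one -> P_pimpl imp.
Proof.
  intros P1 P2 An x y z.
  apply An; [apply P1 | apply P2].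
Qed.

End TwoZeroAlgebra.

Theorem proposition6p3 (A : Type) (imp : A -> A -> A) (one : A) :
  (P_Re imp one -> P_L imp one -> P_Ex imp -> P_starstar imp one ->
     P_p2 imp one) /\
  (P_Ex imp -> P_B imp one -> P_star imp one -> P_pi imp ->
     P_p1 imp one) /\
  (P_p1 imp one -> P_p2 imp one -> P_An imp one -> P_pimpl imp) /\
  (P_Re imp one -> P_Ex imp -> P_B imp one -> P_starstar imp one ->
     P_star imp one -> P_L imp one -> P_An imp one -> P_pi imp ->
     P_pimpl imp).
Proof.
  split; [| split; [| split]].
  - exact (p2_of_Re_L_Ex_starstar A imp one).
  - exact (p1_of_Ex_B_star_pi A imp one).
  - exact (pimpl_of_p1_p2_An A imp one).
  - intros Re Ex B SS S L An Pi.
    apply (pimpl_of_p1_p2_An A imp one); [| | exact An].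
    + exact (p1_of_Ex_B_star_pi A imp one Ex B S Pi).
    + exact (p2_of_Re_L_Ex_starstar A imp one Re L Ex SS).
Qed.
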